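(* Let $\mathbf A$ be regular of bandwidth $(p,q)$ and let $L\le R$ be finite integers with $R-L\ge\tau$. Then $$\mathcal M_{L,R}=\operatorname{Span}\big(\mathbf P_{L,R}\mathcal M_{-\infty,R}\cup\mathbf P_{L,R}\mathcal M_{L,\infty}\big).$$
   Context: Fix $d\ge1$. $\mathcal V^S_d$: doubly infinite sequences $\Psi=\{\psi_j\}_{j\in\mathbb Z}$, $\psi_j\in\mathbb C^d$. A matrix Laurent polynomial of bandwidth $(p,q)$ is $\sum_{r=p}^qa_rw^r$, integers $p\le q$, $a_r$ complex $d\times d$, $a_p\ne0\ne a_q$; its BBL transformation is $(\mathbf A\Psi)_j=\sum_ra_r\psi_{j+r}$. $\mathbf A$ is regular if $\det(w^{-p}A(w,w^{-1}))$ is not the zero polynomial. $p'=\min(p,0)$, $q'=\max(0,q)$, $\tau=q'-p'$. For $-\infty\le L\le R\le\infty$: $\mathcal V_{L,R}$ = sequences with $\psi_j=0$ for $j\notin[L,R]$; $\mathbf P_{L,R}$ = projection onto $\mathcal V_{L,R}$ zeroing entries outside $[L,R]$; bulk solution space $\mathcal M_{L,R}=\ker(\mathbf P_{L-p',R-q'}\mathbf A|_{\mathcal V_{L,R}})$ (infinite endpoints stay infinite). *)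

(* Complex numbers are modelled by an arbitrary
   numClosedFieldType C. *)
From HB Require Import structures.
From Stdlib Require Lists.List.
From mathcomp Require Import all_boot all_order all_algebra.
Set Implicit Arguments. Unset Strict Implicit. Unset Printing Implicit Defensive.
Import Order.TTheory GRing.Theory Num.Theory.
Local Open Scope ring_scope.

Definition dseq (C : numClosedFieldType) (d : nat) := int -> 'cV[C]_d.

Definition bandwidth (C : numClosedFieldType) (d : nat)
    (a : int -> 'M[C]_d) (p q : int) : Prop :=
  p <= q /\ a p != 0 /\ a q != 0 /\ (forall r : int, (r < p) || (q < r) -> a r = 0).

Definition BBL (C : numClosedFieldType) (d : nat)
    (a : int -> 'M[C]_d) (p q : int) (psi : dseq C d) : dseq C d :=
  fun j => \sum_(k < (absz (q - p)).+1) (a (p + k%:Z) *m psi (j + (p + k%:Z))).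

(* w^{-p} A(w, w^{-1}) as a matrix of polynomials in w *)
Definition shifted_symbol (C : numClosedFieldType) (d : nat)
    (a : int -> 'M[C]_d) (p q : int) : 'M[{poly C}]_d :=
  \matrix_(i, j) \sum_(k < (absz (q - p)).+1) ((a (p + k%:Z)) i j)%:P * 'X^k.

Definition regular (C : numClosedFieldType) (d : nat)
    (a : int -> 'M[C]_d) (p q : int) : Prop :=
  \det (shifted_symbol a p q) != 0.

Definition pprime (p : int) : int := Num.min p 0.
Definition qprime (q : int) : int := Num.max 0 q.
Definition tau (p q : int) : int := qprime q - pprime p.

(* Extended endpoints: None on the left means -oo, None on the right means +oo *)
Definition in_rangeb (L R : option int) (j : int) : bool :=
  (if L is Some l then l <= j else true) && (if R is Some r then j <= r else true).

Definition inV (C : numClosedFieldType) (d : nat) (L R : option int)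
    (psi : dseq C d) : Prop :=
  forall j, ~~ in_rangeb L R j -> psi j = 0.

Definition proj (C : numClosedFieldType) (d : nat) (L R : option int)
    (psi : dseq C d) : dseq C d :=
  fun j => if in_rangeb L R j then psi j else 0.

Definition shiftE (L : option int) (s : int) : option int := omap (fun l => l - s) L.

Definition bulk (C : numClosedFieldType) (d : nat)
    (a : int -> 'M[C]_d) (p q : int) (L R : option int) (psi : dseq C d) : Prop :=
  inV L R psi /\
  proj (shiftE L (pprime p)) (shiftE R (qprime q)) (BBL a p q psi) = (fun _ => 0).

Definition in_span (C : numClosedFieldType) (d : nat)
    (S : dseq C d -> Prop) (psi : dseq C d) : Prop :=
  exists s : seq (C * dseq C d),
    (forall x, Stdlib.Lists.List.In x s -> S x.2) /\
    psi = (fun j => \sum_(x <- s) x.1 *: x.2 j).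

From Pilot Require Import Defs.
From HB Require Import structures.
From mathcomp Require Import all_boot all_order all_algebra.
From mathcomp Require Import zify.
From Stdlib Require Import FunctionalExtensionality ClassicalEpsilon.
Import Order.TTheory GRing.Theory Num.Theory.
Set Implicit Arguments. Unset Strict Implicit. Unset Printing Implicit Defensive.
Local Open Scope ring_scope.

(* Each bulk equation only sees a window of [tau + 1] consecutive entries.
   By regularity these equations are independent, so on any window of length
   at least [tau] the solutions form a space of dimension [tau d]: a relation
   between the equations is a polynomial row killed by the symbol, whose
   determinant is nonzero.
   Comparing dimensions inside the window [[L - k, R + k]], where solutions
   agreeing on [[L, R]] glue, the restrictions to [[L, R]] of the solutions on
   [[L - k, R]] and on [[L, R + k]] together span all solutions on [[L, R]].
   The restrictions of the solutions on [[L - k, R]] form a decreasing chain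
   of subspaces in k; where it stalls, every such solution extends one step
   further left without changing on [[L, R]], hence, by shift invariance and
   dependent choice, to a solution on the whole half-line.  Reflecting
   j |-> -j gives the right half-line. *)

Notation pr l r := (proj (Some l) (Some r)).

Lemma projE (C : numClosedFieldType) d l r (psi : dseq C d) j :
  pr l r psi j = if (l <= j) && (j <= r) then psi j else 0.
Proof. by []. Qed.

Lemma tau_ge0 p q : 0 <= tau p q.
Proof. rewrite /tau /pprime /qprime; lia. Qed.

Definition mirror (T : Type) (f : int -> T) : int -> T := fun j => f (- j).

Lemma mirrorK (T : Type) (f : int -> T) : mirror (mirror f) = f.
Proof. by apply: functional_extensionality => j; rewrite /mirror opprK. Qed.

Lemma tau_mirror p q : tau (- q) (- p) = tau p q.
Proof. rewrite /tau /pprime /qprime; lia. Qed.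

Lemma dependent_choice_nat (T : Type) (P : nat -> T -> Prop) (Q : nat -> T -> T -> Prop) x0 :
  P 0%N x0 -> (forall m x, P m x -> exists y, P m.+1 y /\ Q m x y) ->
  exists f : nat -> T, f 0%N = x0 /\ forall m, P m (f m) /\ Q m (f m) (f m.+1).
Proof.
move=> P0 step.
pose next m (x : {x | P m x}) : {y | P m.+1 y /\ Q m (sval x) y} :=
  constructive_indefinite_description _ (step m _ (svalP x)).
pose fix g m : {x | P m x} :=
  if m is m'.+1 then exist _ (sval (next m' (g m'))) (proj1 (svalP (next m' (g m'))))
  else exist _ x0 P0.
exists (fun m => sval (g m)); split=> // m; split; first exact: svalP.
exact: (proj2 (svalP (next m (g m)))).
Qed.

Section Bulk.
Variables (C : numClosedFieldType) (d : nat) (a : int -> 'M[C]_d) (p q : int).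
Hypothesis hpq : p <= q.

Local Notation tau := (tau p q).
Local Notation sol l r := (bulk a p q (Some l) (Some r)).

(* Shifted by [pprime p] so that the equation at [i] involves exactly the
   entries of [psi] on [[i, i + tau]]. *)
Definition eqn_at (psi : dseq C d) (i : int) : 'cV[C]_d := BBL a p q psi (i - pprime p).

Lemma eqn_at_local psi phi i :
  (forall j, i <= j -> j <= i + tau -> psi j = phi j) -> eqn_at psi i = eqn_at phi i.
Proof.
move=> eq_psi; rewrite /eqn_at /BBL; apply: eq_bigr => k _; congr (_ *m _).
apply: eq_psi; have := ltn_ord k; rewrite /tau /pprime /qprime; lia.
Qed.

Lemma eqn_atZD al psi phi i :
  eqn_at (fun j => al *: psi j + phi j) i = al *: eqn_at psi i + eqn_at phi i.
Proof.
rewrite /eqn_at /BBL scaler_sumr -big_split /=; apply: eq_bigr => k _.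
by rewrite mulmxDr scalemxAr.
Qed.

Lemma eqn_at0 i : eqn_at (fun _ => 0) i = 0.
Proof. by rewrite /eqn_at /BBL big1 // => k _; rewrite mulmx0. Qed.

Lemma bulkP lo ro psi :
  bulk a p q lo ro psi <->
  inV lo ro psi /\ (forall i, in_rangeb lo (shiftE ro tau) i -> eqn_at psi i = 0).
Proof.
rewrite /bulk /eqn_at; split=> -[supp eqn]; split=> //.
  move=> i range_i; have := congr1 (fun f => f (i - pprime p)) eqn; rewrite /proj /=.
  case: ifP => // /negP[]; move: range_i {supp eqn}.
  by case: lo => [l|]; case: ro => [r|]; rewrite /in_rangeb /tau /pprime /qprime /=; lia.
apply: functional_extensionality => j; rewrite /proj; case: ifP => // range_j.
rewrite -(addrK (pprime p) j); apply: eqn; move: range_j {supp}.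
by case: lo => [l|]; case: ro => [r|]; rewrite /in_rangeb /tau /pprime /qprime /=; lia.
Qed.

Lemma bulk_window (l l' r r' : int) psi : l = l' -> r = r' -> sol l r psi -> sol l' r' psi.
Proof. by move=> -> ->. Qed.

Lemma bulk0 lo ro : bulk a p q lo ro (fun _ => 0).
Proof. by apply/bulkP; split=> // i _; rewrite eqn_at0. Qed.

Lemma bulkZD lo ro al psi phi : bulk a p q lo ro psi -> bulk a p q lo ro phi ->
  bulk a p q lo ro (fun j => al *: psi j + phi j).
Proof.
move=> /bulkP[supp_psi eqn_psi] /bulkP[supp_phi eqn_phi]; apply/bulkP; split.
  by move=> j out_j; rewrite supp_psi // supp_phi // scaler0 addr0.
by move=> i range_i; rewrite eqn_atZD eqn_psi // eqn_phi // scaler0 addr0.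
Qed.

Lemma bulk_proj lo ro l r psi : bulk a p q lo ro psi ->
  (forall j, l <= j -> j <= r -> in_rangeb lo ro j) -> sol l r (pr l r psi).
Proof.
move=> /bulkP[_ eqn] sub_lr; apply/bulkP; split=> [j /negbTE out_j|i range_i].
  by rewrite /proj out_j.
have tau0 := tau_ge0 p q.
have range_i' : in_rangeb lo (shiftE ro tau) i.
  have := sub_lr i; have := sub_lr (i + tau); move: range_i {eqn sub_lr}.
  by case: lo => [l0|]; case: ro => [r0|]; rewrite /in_rangeb /=; lia.
rewrite -(eqn i range_i'); apply: eqn_at_local => j ij jt.
by rewrite projE; case: ifP => //; move: range_i; rewrite /in_rangeb /=; lia.
Qed.

Lemma bulk_shift l r s psi :
  sol l r psi -> sol (l + s) (r + s) (fun j => psi (j - s)).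
Proof.
move=> /bulkP[supp eqn]; apply/bulkP; split=> [j out_j|i range_i].
  by apply: supp; move: out_j; rewrite /in_rangeb; lia.
rewrite -(eqn (i - s)); last by move: range_i; rewrite /in_rangeb /=; lia.
by rewrite /eqn_at /BBL; apply: eq_bigr => k _; congr (_ *m psi _); lia.
Qed.

(* Every equation sees [tau + 1] consecutive entries, so it lies either left
   of [R] or right of [L]. *)
Lemma bulk_glue (l l' L R r : int) chi eta :
  sol l R chi -> sol l' r eta -> (forall j, L <= j -> j <= R -> chi j = eta j) ->
  l <= L -> l' <= L -> R <= r -> tau <= R - L ->
  sol l r (fun j => if j <= R then chi j else eta j).
Proof.
move=> /bulkP[supp_chi eqn_chi] /bulkP[supp_eta eqn_eta] chi_eta lL l'L Rr tauLR.
have LR : L <= R by have := tau_ge0 p q; lia.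
apply/bulkP; split=> [j|i]; rewrite /in_rangeb /= => range.
  by case: ifPn => jR; [apply: supp_chi | apply: supp_eta]; rewrite /in_rangeb /=; lia.
have [iR|Ri] := boolP (i + tau <= R).
  rewrite -(eqn_chi i); last by rewrite /in_rangeb /=; lia.
  by apply: eqn_at_local => j ij jt; have -> : j <= R by lia.
rewrite -(eqn_eta i); last by rewrite /in_rangeb /=; lia.
apply: eqn_at_local => j ij jt; case: ifP => // jR; apply: chi_eta; lia.
Qed.

Lemma bulk_zero_extr (l L R r : int) chi : l <= L -> R <= r -> tau <= R - L ->
  sol l R chi -> (forall j, L <= j -> j <= R -> chi j = 0) -> sol l r chi.
Proof.
move=> lL Rr tauLR sol_chi chi0.
have := bulk_glue sol_chi (bulk0 _ _) chi0 lL (lexx L) Rr tauLR.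
congr bulk; apply: functional_extensionality => j; case: ifP => // /negbT Rj.
by move/bulkP: sol_chi => [-> //]; rewrite /in_rangeb; lia.
Qed.

Lemma bulk_zero_extl (l L R r : int) eta : l <= L -> R <= r -> tau <= R - L ->
  sol L r eta -> (forall j, L <= j -> j <= R -> eta j = 0) -> sol l r eta.
Proof.
move=> lL Rr tauLR sol_eta eta0.
have eta0' j : L <= j -> j <= R -> 0 = eta j by move=> Lj jR; rewrite eta0.
have := bulk_glue (bulk0 (Some l) (Some R)) sol_eta eta0' lL (lexx L) Rr tauLR.
congr bulk; apply: functional_extensionality => j; case: ifPn => // jR.
have [Lj|jL] := boolP (L <= j); first by rewrite eta0.
by move/bulkP: sol_eta => [-> //]; rewrite /in_rangeb; lia.
Qed.

Lemma bulk_mirror lo ro psi : bulk a p q lo ro psi ->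
  bulk (mirror a) (- q) (- p) (omap -%R ro) (omap -%R lo) (mirror psi).
Proof.
have BBL_mirror : BBL (mirror a) (- q) (- p) (mirror psi) = mirror (BBL a p q psi).
  apply: functional_extensionality => j; rewrite /BBL /mirror.
  have -> : absz (- p - - q) = absz (q - p) by lia.
  rewrite (reindex_inj rev_ord_inj); apply: eq_bigr => k _ /=.
  by congr (a _ *m psi _); have := ltn_ord k; lia.
rewrite /bulk BBL_mirror => -[supp eqn]; split=> [j out_j|].
  rewrite /mirror supp //; move: out_j {supp eqn}.
  by case: lo => [l|]; case: ro => [r|]; rewrite /in_rangeb /=; lia.
apply: functional_extensionality => j; have := congr1 (fun f => f (- j)) eqn.
rewrite /proj /mirror; case: ifP => [_ -> | /negP out_j _]; first by case: ifP.
case: ifP => // range_j; case: out_j; move: range_j {supp eqn}.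
by case: lo => [l|]; case: ro => [r|];
   rewrite /in_rangeb /= /pprime /qprime; lia.
Qed.

Section ExtendLeft.
Variables (L R : int) (k0 : nat).
Hypothesis tauLR : tau <= R - L.
Hypothesis extend1 : forall chi, sol (L - k0%:Z) R chi ->
  exists2 chi', sol (L - k0%:Z - 1) R chi' & forall j, L <= j -> j <= R -> chi' j = chi j.

Lemma extend1_shift s chi : sol (L - k0%:Z + s) (R + s) chi ->
  exists2 chi', sol (L - k0%:Z - 1 + s) (R + s) chi' &
    forall j, L + s <= j -> j <= R + s -> chi' j = chi j.
Proof.
move=> /(bulk_shift (- s)) sol_chi.
have [chi' sol_chi' chi'_chi] := extend1 (bulk_window (addrK s _) (addrK s _) sol_chi).
exists (fun j => chi' (j - s)); first exact: bulk_shift.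
by move=> j Lj jR; rewrite chi'_chi; [congr chi|..]; lia.
Qed.

Lemma extend_left_step m psi : sol (L - m%:Z - k0%:Z) R psi ->
  exists psi', sol (L - m.+1%:Z - k0%:Z) R psi' /\ forall j, L - m%:Z <= j -> psi' j = psi j.
Proof.
move=> sol_psi; have tau0 := tau_ge0 p q.
have sol_res : sol (L - k0%:Z - m%:Z) (R - m%:Z) (pr (L - m%:Z - k0%:Z) (R - m%:Z) psi).
  apply: bulk_window (bulk_proj sol_psi _) => //; rewrite /in_rangeb /=; lia.
have [chi sol_chi chi_psi] := extend1_shift sol_res.
have agree : forall j, L - m%:Z <= j -> j <= R - m%:Z -> chi j = psi j.
  by move=> j Lj jR; rewrite chi_psi // projE; case: ifP => //; lia.
exists (fun j => if j <= R - m%:Z then chi j else psi j); split.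
  by apply: bulk_window (bulk_glue sol_chi sol_psi agree _ _ _ _); lia.
by move=> j Lj; case: ifP => // jR; apply: agree.
Qed.

Lemma extend_left chi : sol (L - k0%:Z) R chi ->
  exists2 phi, bulk a p q None (Some R) phi & forall j, L <= j -> j <= R -> phi j = chi j.
Proof.
move=> sol_chi; have tau0 := tau_ge0 p q.
have sol_chi0 : sol (L - 0%:Z - k0%:Z) R chi by apply: bulk_window sol_chi; lia.
have [f [f0 stepf]] := dependent_choice_nat sol_chi0 extend_left_step.
have f_stable m n (j : int) : (m <= n)%N -> L - m%:Z <= j -> f n j = f m j.
  move=> mn Lj; elim: n mn => [|n IHn]; first by rewrite leqn0 => /eqP->.
  rewrite leq_eqVlt => /orP[/eqP-> //|]; rewrite ltnS => mn.
  by rewrite (proj2 (stepf n)) ?IHn //; lia.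
have lim_f m (j : int) : L - m%:Z <= j -> f (absz (L - j)) j = f m j.
  move=> Lj; rewrite -(f_stable (absz (L - j)) (maxn m (absz (L - j)))) ?leq_maxr //; last by lia.
  by rewrite (f_stable m) ?leq_maxl.
exists (fun j => f (absz (L - j)) j); last by move=> j Lj jR; rewrite (lim_f 0%N) ?f0 //; lia.
apply/bulkP; split=> [j|i]; rewrite /in_rangeb /= => range.
  by rewrite (lim_f 0%N); [case/bulkP: (proj1 (stepf 0%N)) => -> //; rewrite /in_rangeb|]; lia.
have /bulkP[_ eqn] := proj1 (stepf (absz (L - i))).
rewrite -(eqn i); last by rewrite /in_rangeb /=; lia.
by apply: eqn_at_local => j ij jt; apply: lim_f; lia.
Qed.

End ExtendLeft.

End Bulk.

Lemma lin1_mxE (F : fieldType) m n (f : 'rV[F]_m -> 'rV[F]_n) :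
  (forall al u v, f (al *: u + v) = al *: f u + f v) -> forall u, u *m lin1_mx f = f u.
Proof.
move=> f_lin u.
pose fL : {linear 'rV[F]_m -> 'rV[F]_n} := HB.pack f (GRing.isLinear.Build _ _ _ _ f f_lin).
exact: (mul_rV_lin1 fL).
Qed.

Lemma sub_mulmxP (F : fieldType) m1 m2 n k (u : 'M[F]_(m1, n)) (A : 'M_(m2, k)) (B : 'M_(k, n)) :
  (u <= A *m B)%MS -> exists2 v : 'M_(m1, k), (v <= A)%MS & u = v *m B.
Proof. by case/submxP=> D ->; exists (D *m A); rewrite ?submxMl ?mulmxA. Qed.

Lemma mulmx_subP (F : fieldType) m1 m2 n k (A : 'M[F]_(m1, n)) (M : 'M_(n, k)) (B : 'M_(m2, k)) :
  (forall u : 'rV_n, (u <= A)%MS -> (u *m M <= B)%MS) -> (A *m M <= B)%MS.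
Proof. by move=> AMB; apply/rV_subP => v /sub_mulmxP[u /AMB uMB ->]. Qed.

Definition dseq_linear (C : numClosedFieldType) d (G : dseq C d -> dseq C d) :=
  forall al psi phi, G (fun j => al *: psi j + phi j) = (fun j => al *: G psi j + G phi j).

Lemma proj_linear (C : numClosedFieldType) d lo ro : dseq_linear (@proj C d lo ro).
Proof.
move=> al psi phi; apply: functional_extensionality => j; rewrite /proj.
by case: ifP; rewrite ?scaler0 ?addr0.
Qed.

Section Window.
Variables (C : numClosedFieldType) (d : nat).
Implicit Types (psi phi : dseq C d) (b : int) (n : nat).

Definition in_window b n (j : int) := (b <= j) && (j <= b + n%:Z).

(* Coordinates of [psi] on the window [[b, b + n]]: block [i] holds [psi (b + i)]. *)
Definition enc b n psi : 'rV[C]_(n.+1 * d) :=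
  mxvec (\matrix_(i < n.+1, c < d) psi (b + i%:Z) c ord0).

Definition dec b n (u : 'rV[C]_(n.+1 * d)) : dseq C d :=
  fun j => if in_window b n j then \col_c (vec_mx u) (inord (absz (j - b))) c else 0.

Arguments dec b n u j : clear implicits.

Lemma dec_out b n u j : ~~ in_window b n j -> dec b n u j = 0.
Proof. by rewrite /dec => /negbTE ->. Qed.

Lemma dec_encE b n psi j : in_window b n j -> dec b n (enc b n psi) j = psi j.
Proof.
rewrite /dec /enc => win_j; rewrite win_j mxvecK; apply/matrixP => c z.
rewrite !mxE (ord1 z) inordK /=; last by move: win_j; rewrite /in_window; lia.
by congr (psi _ c _); move: win_j; rewrite /in_window; lia.
Qed.

Lemma dec_enc b n psi :
  (forall j, ~~ in_window b n j -> psi j = 0) -> dec b n (enc b n psi) = psi.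
Proof.
move=> supp; apply: functional_extensionality => j.
by have [/dec_encE //|out_j] := boolP (in_window b n j); rewrite dec_out ?supp.
Qed.

Lemma enc_dec b n u : enc b n (dec b n u) = u.
Proof.
rewrite /enc -[RHS]vec_mxK; congr mxvec; apply/matrixP => i c.
have win_i : in_window b n (b + i%:Z) by rewrite /in_window; have := ltn_ord i; lia.
rewrite mxE /dec win_i mxE; congr (vec_mx u _ _); apply: val_inj => /=.
by rewrite inordK; have := ltn_ord i; lia.
Qed.

Lemma eq_enc b n psi phi :
  (forall j, in_window b n j -> psi j = phi j) -> enc b n psi = enc b n phi.
Proof.
move=> eq_win; rewrite /enc; congr mxvec; apply/matrixP => i c; rewrite !mxE eq_win //.
by rewrite /in_window; have := ltn_ord i; lia.
Qed.

Lemma encZD b n al psi phi :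
  enc b n (fun j => al *: psi j + phi j) = al *: enc b n psi + enc b n phi.
Proof. by rewrite /enc -linearP; congr mxvec; apply/matrixP => i c; rewrite !mxE. Qed.

Lemma decZD b n al u v :
  dec b n (al *: u + v) = (fun j => al *: dec b n u j + dec b n v j).
Proof.
apply: functional_extensionality => j; rewrite /dec linearP /=.
by case: ifP => _; [apply/matrixP => c z; rewrite !mxE | rewrite scaler0 addr0].
Qed.

Lemma enc0 b n : enc b n (fun _ => 0) = 0.
Proof. by apply/rowP => e; case/mxvec_indexP: e => i c; rewrite mxvecE !mxE. Qed.

Lemma dec0 b n : dec b n 0 = (fun _ => 0).
Proof.
apply: functional_extensionality => j; rewrite /dec linear0.
by case: ifP => // _; apply/matrixP => c z; rewrite !mxE.
Qed.

Definition window_mx b n b' n' (G : dseq C d -> dseq C d) :=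
  lin1_mx (fun u : 'rV_(n.+1 * d) => enc b' n' (G (dec b n u))).

Lemma mul_window_mx b n b' n' G u : dseq_linear G ->
  u *m window_mx b n b' n' G = enc b' n' (G (dec b n u)).
Proof. by move=> G_lin; apply: lin1_mxE => al x y; rewrite decZD G_lin encZD. Qed.

Definition delta_seq (s : int) (v : 'cV[C]_d) : dseq C d :=
  fun j => if j == s then v else 0.

Lemma dec_delta b n (i : 'I_n.+1) (c : 'I_d) :
  dec b n (delta_mx 0 (mxvec_index i c)) = delta_seq (b + i%:Z) (delta_mx c 0).
Proof.
apply: functional_extensionality => j; rewrite /dec /delta_seq vec_mx_delta.
case: ifPn => [win_j|out_j]; last first.
  by case: eqP => // j_eq; case/negP: out_j; rewrite /in_window; have := ltn_ord i; lia.
have inord_i : (inord (absz (j - b)) == i) = (j == b + i%:Z).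
  apply/eqP/eqP => [<-|->]; last by apply: val_inj; rewrite /= inordK; have := ltn_ord i; lia.
  by rewrite inordK; move: win_j; rewrite /in_window; lia.
rewrite -inord_i; case: eqP => [->|/eqP ne]; apply/matrixP => c' z; rewrite !mxE.
  by rewrite (ord1 z) !eqxx andbT.
by rewrite (negbTE ne).
Qed.

End Window.
Arguments dec {C d} b n u j.
Arguments enc {C d} b n psi.
Arguments window_mx {C d} b n b' n' G.

Lemma sum_mxvec_index (V : nmodType) m n (F : 'I_(m * n) -> V) :
  \sum_(o < m * n) F o = \sum_(i < m) \sum_(j < n) F (mxvec_index i j).
Proof.
rewrite pair_big /= (reindex (uncurry (@mxvec_index m n))) /=; last exact: curry_mxvec_bij.
by apply: eq_bigr => -[i j].
Qed.

Section EquationMatrix.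
Variables (C : numClosedFieldType) (d : nat) (a : int -> 'M[C]_d) (p q : int).
Hypothesis hpq : p <= q.
Hypothesis a_out : forall r : int, (r < p) || (q < r) -> a r = 0.

Local Notation tn := (absz (tau p q)).

Lemma eqn_at_linear : dseq_linear (eqn_at a p q).
Proof. by move=> al psi phi; apply: functional_extensionality => i; apply: eqn_atZD. Qed.

Lemma eqn_at_delta s v i : eqn_at a p q (delta_seq s v) i = a (s - i + pprime p) *m v.
Proof.
rewrite /eqn_at /BBL /delta_seq.
have [in_band|out_band] := boolP ((p <= s - i + pprime p) && (s - i + pprime p <= q)).
  have k_lt : (absz (s - i + pprime p - p)%R < (absz (q - p)).+1)%N by lia.
  rewrite (bigD1 (Ordinal k_lt)) //= big1 ?addr0 => [|k /eqP k_ne].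
    by case: ifP => [_|/eqP[]]; [congr (a _ *m v)|]; lia.
  case: ifP => [/eqP k_eq|_]; last by rewrite mulmx0.
  by case: k_ne; apply: val_inj => /=; lia.
rewrite a_out ?mul0mx; last by apply/orP; lia.
rewrite big1 // => k _; case: ifP => [/eqP k_eq|_]; last by rewrite mulmx0.
by case/negP: out_band; have := ltn_ord k; lia.
Qed.

(* Rows are indexed by the unknowns [psi (l + i)], columns by the equations at [l + i']. *)
Definition eqn_mx l m := window_mx l (m + tn) l m (eqn_at a p q).

Lemma eqn_mx_entry l m (i : 'I_(m + tn).+1) (c : 'I_d) (i' : 'I_m.+1) (c' : 'I_d) :
  eqn_mx l m (mxvec_index i c) (mxvec_index i' c') = a (i%:Z - i'%:Z + pprime p) c' c.
Proof.
have -> : eqn_mx l m (mxvec_index i c) (mxvec_index i' c') =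
    ((delta_mx 0 (mxvec_index i c) : 'rV_((m + tn).+1 * d)) *m eqn_mx l m) 0 (mxvec_index i' c').
  by rewrite -rowE !mxE.
rewrite mul_window_mx; last exact: eqn_at_linear.
rewrite dec_delta /enc mxvecE mxE eqn_at_delta mxE (bigD1 c) //= mxE eqxx mulr1.
rewrite big1 ?addr0 => [|k /negbTE k_ne]; last by rewrite mxE k_ne mulr0.
by congr (a _ _ _); lia.
Qed.

Lemma coef_shifted_symbol c' c k : (shifted_symbol a p q c' c)`_k = a (p + k%:Z) c' c.
Proof.
rewrite mxE; under eq_bigr do rewrite mul_polyC.
rewrite coef_sumMXn /= (big_ord1_eq _ (fun i => a (p + i%:Z) c' c)); case: ltnP => // k_big.
by rewrite a_out ?mxE //; apply/orP; right; lia.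
Qed.

Lemma coef_Xn_mul_shifted_symbol c' c k s :
  ('X^k * shifted_symbol a p q c' c)`_s = a (p + s%:Z - k%:Z) c' c.
Proof.
rewrite coefXnM coef_shifted_symbol; case: ltnP => [s_lt|k_le].
  by rewrite a_out ?mxE //; apply/orP; left; lia.
by congr (a _ _ _); lia.
Qed.

Lemma regular_row_eq0 (X : 'rV[{poly C}]_d) :
  regular a p q -> X *m shifted_symbol a p q = 0 -> X = 0.
Proof.
move=> reg XA0; have := congr1 (mulmx^~ (\adj (shifted_symbol a p q))) XA0.
rewrite mul0mx -mulmxA mul_mx_adj mul_mx_scalar => /rowP XdetA; apply/rowP => c.
move: (XdetA c); rewrite !mxE => /eqP; rewrite mulf_eq0 => /orP[/eqP det0|/eqP //].
by move: reg; rewrite /regular det0 eqxx.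
Qed.

(* A relation between the equations is the coefficient list of a polynomial
   row [X] with [X * A(w) = 0]. *)
Lemma eqn_mx_free l m : regular a p q -> row_free (eqn_mx l m)^T.
Proof.
move=> reg; apply: inj_row_free => x xE0.
pose X : 'rV[{poly C}]_d := \row_c' \sum_(i' < m.+1) x 0 (mxvec_index i' c') *: 'X^i'.
have coefXA s c : ((X *m shifted_symbol a p q) 0 c)`_s =
    \sum_(i' < m.+1) \sum_(c' < d) x 0 (mxvec_index i' c') * a (p + s%:Z - i'%:Z) c' c.
  rewrite mxE coef_sum exchange_big /=; apply: eq_bigr => c' _.
  rewrite mxE mulr_suml coef_sum; apply: eq_bigr => i' _.
  by rewrite -scalerAl coefZ coef_Xn_mul_shifted_symbol.
have {coefXA}XA0 : X *m shifted_symbol a p q = 0.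
  apply/rowP => c; apply/polyP => s; rewrite coefXA mxE coef0.
  have [s_small|s_big] := leqP (s + absz (p - pprime p)%R) (m + tn).
    have i_lt : (s + absz (p - pprime p)%R < (m + tn).+1)%N by [].
    move/rowP: xE0 => /(_ (mxvec_index (Ordinal i_lt) c)).
    rewrite !mxE sum_mxvec_index => xE0_ic; rewrite -[RHS]xE0_ic.
    apply: eq_bigr => i' _; apply: eq_bigr => c' _.
    by rewrite mxE eqn_mx_entry; congr (_ * a _ _ _); rewrite /= /pprime; lia.
  rewrite big1 // => i' _; rewrite big1 // => c' _; rewrite a_out ?mxE ?mulr0 //.
  by apply/orP; right; move: s_big; have := ltn_ord i'; rewrite /tau /pprime /qprime; lia.
apply/rowP => o; case/mxvec_indexP: o => i' c'.
have := congr1 (fun Y : 'rV[{poly C}]_d => (Y 0 c')`_i') (regular_row_eq0 reg XA0).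
rewrite !mxE coef0 coef_sum (bigD1 i') //= coefZ coefXn eqxx mulr1 big1 ?addr0 // => j ji'.
by rewrite coefZ coefXn eq_sym (negbTE (ji' : (j : nat) != i')) mulr0.
Qed.

Lemma rank_ker_eqn_mx l m : regular a p q -> \rank (kermx (eqn_mx l m)) = (tn * d)%N.
Proof.
move=> reg; rewrite mxrank_ker -mxrank_tr.
by move: (eqn_mx_free l m reg); rewrite /row_free => /eqP ->; lia.
Qed.

End EquationMatrix.

Lemma mxchain_stable (F : fieldType) n (r : nat -> nat) (U : forall k, 'M[F]_(r k, n)) :
  (forall k, (U k.+1 <= U k)%MS) -> exists k0, (U k0 <= U k0.+1)%MS.
Proof.
move=> decr; set N := (\rank (U 0%N)).+1.
have [/existsP[k stab]|/existsPn unstable] := boolP [exists k : 'I_N, (U k <= U k.+1)%MS].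
  by exists k.
have rank_drop k : (k <= N)%N -> (\rank (U k) + k <= \rank (U 0%N))%N.
  elim: k => [|k IHk] kN; first by rewrite addn0.
  have [le_rk /(congr1 negb)] := mxrank_leqif_sup (decr k).
  rewrite (unstable (Ordinal kN)) /= => ne_rk.
  by move: (IHk (ltnW kN)) le_rk ne_rk; lia.
by have := rank_drop N (leqnn N); lia.
Qed.

Section SolutionSpaces.
Variables (C : numClosedFieldType) (d : nat) (a : int -> 'M[C]_d) (p q : int).
Hypothesis hpq : p <= q.

Local Notation tau := (tau p q).
Local Notation tn := (absz (Defs.tau p q)).
Local Notation sol l r := (bulk a p q (Some l) (Some r)).

Definition sol_mx b n (l r : int) :=
  kermx (eqn_mx a p q l (absz (r - l - tau)%R))
    *m window_mx l (absz (r - l - tau)%R + tn) b n (fun psi => psi).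

Lemma sub_sol_mxP (b : int) n (l r : int) u : tau <= r - l ->
  (u <= sol_mx b n l r)%MS <-> exists2 psi, sol l r psi & u = enc b n psi.
Proof.
set m := absz (r - l - tau)%R => tau_lr.
have lmr : l + (m + tn)%:Z = r by have := tau_ge0 p q; lia.
split=> [/sub_mulmxP[v /sub_kermxP vE0 ->]|[psi sol_psi ->]].
  exists (dec l (m + tn) v); last by rewrite mul_window_mx.
  apply/(bulkP a hpq); split=> [j|i]; rewrite /in_rangeb /= => range.
    by rewrite dec_out // /in_window; lia.
  move: vE0; rewrite mul_window_mx; last exact: eqn_at_linear.
  by move/(congr1 (fun w => dec l m w i)); rewrite dec_encE ?dec0 // /in_window; lia.
have/(bulkP a hpq)[supp eqn] := sol_psi.
have dec_psi : dec l (m + tn) (enc l (m + tn) psi) = psi.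
  by apply: dec_enc => j out_j; apply: supp; move: out_j; rewrite /in_window /in_rangeb; lia.
have -> : enc b n psi = enc l (m + tn) psi *m window_mx l (m + tn) b n (fun psi => psi).
  by rewrite mul_window_mx ?dec_psi.
apply: submxMr; apply/sub_kermxP; rewrite mul_window_mx ?dec_psi; last exact: eqn_at_linear.
rewrite -(enc0 C d l m); apply: eq_enc => i; rewrite /in_window => win_i.
by apply: eqn; rewrite /in_rangeb /=; lia.
Qed.

Lemma sub_sol_mx_decP (b : int) n (l r : int) u : tau <= r - l -> b <= l -> r <= b + n%:Z ->
  (u <= sol_mx b n l r)%MS <-> sol l r (dec b n u).
Proof.
move=> tau_lr bl rn; rewrite sub_sol_mxP //; split=> [[psi sol_psi ->]|sol_u].
  rewrite dec_enc //; case/(bulkP a hpq): sol_psi => supp _ j out_j; apply: supp.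
  by move: out_j; rewrite /in_window /in_rangeb; lia.
by exists (dec b n u); rewrite ?enc_dec.
Qed.

Lemma rank_sol_mx (b : int) n (l r : int) :
  (forall r, (r < p) || (q < r) -> a r = 0) -> regular a p q ->
  tau <= r - l -> b <= l -> r <= b + n%:Z -> \rank (sol_mx b n l r) = (tn * d)%N.
Proof.
move=> a_out reg tau_lr bl rn; rewrite mxrankMfree ?rank_ker_eqn_mx //.
apply: inj_row_free => x; rewrite mul_window_mx // => encx0.
rewrite -[x](enc_dec l) -(enc0 C d l _).
apply: eq_enc => j; rewrite /in_window => win_j.
have := congr1 (fun w => dec b n w j) encx0; rewrite dec_encE ?dec0 // /in_window.
by have := tau_ge0 p q; lia.
Qed.

End SolutionSpaces.

Section Extension.
Variables (C : numClosedFieldType) (d : nat) (a : int -> 'M[C]_d) (p q : int).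
Hypothesis hpq : p <= q.

Local Notation tau := (tau p q).
Local Notation sol l r := (bulk a p q (Some l) (Some r)).

(* The restrictions to [[L, R]] of the solutions on [[L - k, R]] decrease
   with k, so the chain stalls at some k0. *)
Lemma extend_left_once (L R : int) : tau <= R - L ->
  exists k0 : nat, forall chi, sol (L - k0%:Z) R chi ->
    exists2 chi', sol (L - k0%:Z - 1) R chi' & forall j, L <= j -> j <= R -> chi' j = chi j.
Proof.
move=> tauLR; set n := absz (R - L).
have Rn : R = L + n%:Z by have := tau_ge0 p q; lia.
pose U k := sol_mx a p q L n (L - k%:Z) R.
have decr k : (U k.+1 <= U k)%MS.
  apply/rV_subP => u /(sub_sol_mxP a hpq) [|psi sol_psi ->]; first lia.
  apply/(sub_sol_mxP a hpq); first lia.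
  exists (pr (L - k%:Z) R psi).
    by apply: (bulk_proj hpq sol_psi) => j; rewrite /in_rangeb /=; lia.
  by apply: eq_enc => j; rewrite /in_window projE; case: ifP => //; lia.
have [k0 stall] := mxchain_stable decr.
exists k0 => chi sol_chi.
have enc_chi : (enc L n chi <= U k0.+1)%MS.
  by apply: submx_trans stall; apply/(sub_sol_mxP a hpq); [lia|exists chi].
case/(sub_sol_mxP a hpq): enc_chi => [|chi' sol_chi' enc_eq]; first lia.
exists chi'; first by apply: bulk_window sol_chi'; lia.
move=> j Lj jR; have := congr1 (fun w => dec L n w j) enc_eq.
by rewrite !dec_encE // /in_window; lia.
Qed.

Theorem bulk_extend_left (L R : int) : tau <= R - L ->
  exists k0 : nat, forall (k : nat) chi, (k0 <= k)%N -> sol (L - k%:Z) R chi ->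
    exists2 phi, bulk a p q None (Some R) phi & forall j, L <= j -> j <= R -> phi j = chi j.
Proof.
move=> tauLR; have [k0 extend1] := extend_left_once tauLR.
exists k0 => k chi k0k sol_chi.
have [|phi sol_phi phi_chi] := extend_left hpq tauLR extend1 (chi := pr (L - k0%:Z) R chi).
  by apply: (bulk_proj hpq sol_chi) => j; rewrite /in_rangeb /=; lia.
by exists phi => // j Lj jR; rewrite phi_chi // projE ifT //; lia.
Qed.

End Extension.

Theorem bulk_extend_right (C : numClosedFieldType) d (a : int -> 'M[C]_d) (p q L R : int) :
  p <= q -> tau p q <= R - L ->
  exists k0 : nat, forall (k : nat) eta, (k0 <= k)%N -> bulk a p q (Some L) (Some (R + k%:Z)) eta ->
    exists2 phi, bulk a p q (Some L) None phi & forall j, L <= j -> j <= R -> phi j = eta j.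
Proof.
move=> hpq tauLR; have hpq' : - q <= - p by lia.
have [|k0 extend] := bulk_extend_left (mirror a) hpq' (L := - R) (R := - L).
  by rewrite tau_mirror; lia.
exists k0 => k eta k0k /(bulk_mirror hpq) /= sol_eta.
have [|phi sol_phi phi_eta] := extend k (mirror eta) k0k.
  by apply: bulk_window sol_eta; lia.
exists (mirror phi).
  by have := bulk_mirror hpq' sol_phi; rewrite mirrorK /= !opprK.
by move=> j Lj jR; rewrite /mirror phi_eta /mirror ?opprK //; lia.
Qed.

Section Decomposition.
Variables (C : numClosedFieldType) (d : nat) (a : int -> 'M[C]_d) (p q : int).
Hypothesis hpq : p <= q.
Hypothesis a_out : forall r : int, (r < p) || (q < r) -> a r = 0.
Hypothesis reg : regular a p q.
Variables (L R : int) (k : nat).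
Hypothesis tauLR : tau p q <= R - L.

Local Notation tau := (tau p q).
Local Notation tn := (absz (Defs.tau p q)).
Local Notation sol l r := (bulk a p q (Some l) (Some r)).

(* All solution spaces are compared in coordinates on [[L - k, R + k]];
   [rho] is the restriction to [[L, R]]. *)
Local Notation n := (absz (R - L) + k + k)%N.
Local Notation dW := (dec (L - k%:Z) n).
Local Notation eW := (enc (L - k%:Z) n).
Local Notation S l r := (sol_mx a p q (L - k%:Z) n l r).
Local Notation rho := (window_mx (L - k%:Z) n (L - k%:Z) n (@proj C d (Some L) (Some R))).

Let LR : L <= R. Proof. by have := tau_ge0 p q; lia. Qed.

Lemma sub_sol_winP (l r : int) u : L - k%:Z <= l -> r <= R + k%:Z -> tau <= r - l ->
  (u <= S l r)%MS <-> sol l r (dW u).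
Proof. by move=> lL Rr tau_lr; apply: (sub_sol_mx_decP a hpq) => //; lia. Qed.

Lemma dec_mul_rho u : dW (u *m rho) = pr L R (dW u).
Proof.
rewrite mul_window_mx; last exact: proj_linear.
by apply: dec_enc => j; rewrite /in_window projE; case: ifP => //; lia.
Qed.

Lemma sub_ker_rhoP u : (u <= kermx rho)%MS <-> forall j, L <= j -> j <= R -> dW u j = 0.
Proof.
split=> [/sub_kermxP/(congr1 dW) | u0].
  rewrite dec_mul_rho dec0 => pr0 j Lj jR.
  by have := congr1 (fun f => f j) pr0; rewrite projE /=; case: ifP => //; lia.
apply/sub_kermxP; rewrite -(enc_dec (L - k%:Z) (u *m rho)) dec_mul_rho -(enc0 C d (L - k%:Z) n).
by apply: eq_enc => j _; rewrite projE; case: ifP => // /andP[]; apply: u0.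
Qed.

Lemma mul_rho_sub_sol (l r : int) : L - k%:Z <= l -> l <= L -> R <= r -> r <= R + k%:Z ->
  (S l r *m rho <= S L R)%MS.
Proof.
move=> ll lL Rr rr; apply: mulmx_subP => u /sub_sol_winP sol_u.
apply/sub_sol_winP; rewrite ?dec_mul_rho; try lia.
by apply: (bulk_proj hpq (sol_u _ _ _)) => [|||j Lj jR]; rewrite /in_rangeb; lia.
Qed.

Lemma mul_rho_eq u v : (forall j, L <= j -> j <= R -> dW u j = dW v j) -> u *m rho = v *m rho.
Proof.
move=> uv; apply: (can_inj (@enc_dec C d (L - k%:Z) n)); rewrite !dec_mul_rho.
by apply: functional_extensionality => j; rewrite !projE; case: ifP => // /andP[]; apply: uv.
Qed.

Lemma dec_enc_sol (l r : int) psi :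
  L - k%:Z <= l -> r <= R + k%:Z -> sol l r psi -> dW (eW psi) = psi.
Proof.
move=> lL Rr /(bulkP a hpq)[supp _]; apply: dec_enc => j out_j; apply: supp.
by move: out_j; rewrite /in_window /in_rangeb; lia.
Qed.

Lemma mul_rho_restrict (l r l' r' : int) : L - k%:Z <= l -> l <= l' -> l' <= L ->
  R <= r' -> r' <= r -> r <= R + k%:Z -> (S l r *m rho <= S l' r' *m rho)%MS.
Proof.
move=> ll ll' l'L Rr' r'r rr; apply: mulmx_subP => u /sub_sol_winP sol_u.
have sol_v : sol l' r' (pr l' r' (dW u)).
  by apply: (bulk_proj hpq (sol_u _ _ _)) => [|||j lj jr]; rewrite /in_rangeb; lia.
have dec_v : dW (eW (pr l' r' (dW u))) = pr l' r' (dW u) by apply: dec_enc_sol sol_v; lia.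
rewrite (@mul_rho_eq u (eW (pr l' r' (dW u)))); last first.
  by move=> j Lj jR; rewrite dec_v projE; case: ifP => //; lia.
by apply: submxMr; apply/sub_sol_winP; rewrite ?dec_v //; lia.
Qed.

Lemma cap_rho_sub :
  (S (L - k%:Z) R *m rho :&: S L (R + k%:Z) *m rho <= S (L - k%:Z) (R + k%:Z) *m rho)%MS.
Proof.
apply/rV_subP => u; rewrite sub_capmx => /andP[/sub_mulmxP[v1 S1v1 ->] /sub_mulmxP[v2 S2v2 v12]].
have sol1 : sol (L - k%:Z) R (dW v1) by apply/sub_sol_winP => //; lia.
have sol2 : sol L (R + k%:Z) (dW v2) by apply/sub_sol_winP => //; lia.
have agree j : L <= j -> j <= R -> dW v1 j = dW v2 j.
  move=> Lj jR; have := congr1 (fun w => dW w j) v12.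
  by rewrite !dec_mul_rho !projE; case: ifP => //; lia.
have sol_z : sol (L - k%:Z) (R + k%:Z) (fun j => if j <= R then dW v1 j else dW v2 j).
  by apply: (bulk_glue hpq sol1 sol2 agree); lia.
have dec_z := dec_enc_sol (lexx _) (lexx _) sol_z.
rewrite (@mul_rho_eq v1 (eW (fun j => if j <= R then dW v1 j else dW v2 j))); last first.
  by move=> j Lj jR; rewrite dec_z jR.
by apply: submxMr; apply/sub_sol_winP; rewrite ?dec_z //; lia.
Qed.

Lemma ker_split :
  (S (L - k%:Z) (R + k%:Z) :&: kermx rho
    <= (S (L - k%:Z) R :&: kermx rho) + (S L (R + k%:Z) :&: kermx rho))%MS.
Proof.
apply/rV_subP => u; rewrite sub_capmx => /andP[/sub_sol_winP sol_u /sub_ker_rhoP u0].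
have {}sol_u : sol (L - k%:Z) (R + k%:Z) (dW u) by apply: sol_u; lia.
have sol1 : sol (L - k%:Z) R (pr (L - k%:Z) R (dW u)).
  by apply: (bulk_proj hpq sol_u) => j; rewrite /in_rangeb /=; lia.
have sol2 : sol L (R + k%:Z) (pr L (R + k%:Z) (dW u)).
  by apply: (bulk_proj hpq sol_u) => j; rewrite /in_rangeb /=; lia.
have split_u : u = eW (pr (L - k%:Z) R (dW u)) + eW (pr L (R + k%:Z) (dW u)).
  rewrite -[eW _]scale1r -encZD -[LHS](enc_dec (L - k%:Z)); apply: eq_enc => j win_j.
  move: win_j; rewrite /in_window scale1r !projE => win_j.
  have [/andP[Lj jR]|outside_LR] := boolP ((L <= j) && (j <= R)).
    by rewrite u0 // !if_same addr0.
  by case: ifPn => c1; case: ifPn => c2; rewrite ?addr0 ?add0r //; lia.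
have dec1 : dW (eW (pr (L - k%:Z) R (dW u))) = pr (L - k%:Z) R (dW u).
  by apply: dec_enc_sol sol1; lia.
have dec2 : dW (eW (pr L (R + k%:Z) (dW u))) = pr L (R + k%:Z) (dW u).
  by apply: dec_enc_sol sol2; lia.
rewrite split_u; apply: addmx_sub_adds; rewrite sub_capmx; apply/andP; split.
- by apply/sub_sol_winP; rewrite ?dec1 //; lia.
- by apply/sub_ker_rhoP => j Lj jR; rewrite dec1 projE u0 //; case: ifP.
- by apply/sub_sol_winP; rewrite ?dec2 //; lia.
- by apply/sub_ker_rhoP => j Lj jR; rewrite dec2 projE u0 //; case: ifP.
Qed.

Lemma rho_sub_cap :
  (S (L - k%:Z) (R + k%:Z) *m rho <= S (L - k%:Z) R *m rho :&: S L (R + k%:Z) *m rho)%MS.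
Proof. by rewrite sub_capmx !mul_rho_restrict //; lia. Qed.

Lemma ker_sum_sub :
  ((S (L - k%:Z) R :&: kermx rho) + (S L (R + k%:Z) :&: kermx rho)
    <= S (L - k%:Z) (R + k%:Z) :&: kermx rho)%MS.
Proof.
rewrite addsmx_sub; apply/andP; split; apply/rV_subP => u;
  rewrite !sub_capmx => /andP[/sub_sol_winP sol_u ker_u]; rewrite ker_u andbT;
  move/sub_ker_rhoP: ker_u => u0; apply/sub_sol_winP; try lia.
  by apply: (bulk_zero_extr hpq _ _ tauLR (sol_u _ _ _) u0); lia.
by apply: (bulk_zero_extl hpq _ _ tauLR (sol_u _ _ _) u0); lia.
Qed.

Lemma ker_cap_eq0 : ((S (L - k%:Z) R :&: kermx rho) :&: (S L (R + k%:Z) :&: kermx rho))%MS = 0.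
Proof.
apply/eqP; rewrite -submx0; apply/rV_subP => u.
rewrite !sub_capmx => /andP[/andP[/sub_sol_winP sol1 /sub_ker_rhoP u0] /andP[/sub_sol_winP sol2 _]].
have /(bulkP a hpq)[supp1 _] : sol (L - k%:Z) R (dW u) by apply: sol1; lia.
have /(bulkP a hpq)[supp2 _] : sol L (R + k%:Z) (dW u) by apply: sol2; lia.
suff -> : u = 0 by rewrite sub0mx.
rewrite -(enc_dec (L - k%:Z) u) -(enc0 C d (L - k%:Z) n); apply: eq_enc => j _.
have [jL|Lj] := ltP j L; first by apply: supp2; rewrite /in_rangeb /=; lia.
have [jR|Rj] := leP j R; first exact: u0.
by apply: supp1; rewrite /in_rangeb /=; lia.
Qed.

(* Counting dimensions, each of the four solution spaces having dimension
   [tau d]: the two restricted spaces meet in the restriction of the glued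
   space, whose kernel splits into the two kernels. *)
Lemma rank_rho_sum :
  \rank (S (L - k%:Z) R *m rho + S L (R + k%:Z) *m rho)%MS = (tn * d)%N.
Proof.
have rk l r : L - k%:Z <= l -> r <= R + k%:Z -> tau <= r - l -> \rank (S l r) = (tn * d)%N.
  by move=> lL Rr tau_lr; apply: rank_sol_mx => //; lia.
have rk1 := rk (L - k%:Z) R (lexx _) (ltac:(lia)) (ltac:(lia)).
have rk2 := rk L (R + k%:Z) (ltac:(lia)) (lexx _) (ltac:(lia)).
have rkG := rk (L - k%:Z) (R + k%:Z) (lexx _) (lexx _) (ltac:(lia)).
have e1 := mxrank_mul_ker (S (L - k%:Z) R) rho.
have e2 := mxrank_mul_ker (S L (R + k%:Z)) rho.
have e3 := mxrank_mul_ker (S (L - k%:Z) (R + k%:Z)) rho.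
have e4 := mxrank_sum_cap (S (L - k%:Z) R *m rho) (S L (R + k%:Z) *m rho).
have e5 : \rank (S (L - k%:Z) R *m rho :&: S L (R + k%:Z) *m rho)%MS
          = \rank (S (L - k%:Z) (R + k%:Z) *m rho).
  by apply/eqP; rewrite eqn_leq !mxrankS ?cap_rho_sub ?rho_sub_cap.
have e6 : \rank (S (L - k%:Z) (R + k%:Z) :&: kermx rho)%MS
          = \rank ((S (L - k%:Z) R :&: kermx rho) + (S L (R + k%:Z) :&: kermx rho))%MS.
  by apply/eqP; rewrite eqn_leq !mxrankS ?ker_split ?ker_sum_sub.
have e7 := mxrank_disjoint_sum ker_cap_eq0.
by move: e1 e2 e3 e4 e5 e6 e7; rewrite rk1 rk2 rkG; lia.
Qed.

Lemma sol_sub_rho_sum : (S L R <= S (L - k%:Z) R *m rho + S L (R + k%:Z) *m rho)%MS.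
Proof.
have sub_sum : (S (L - k%:Z) R *m rho + S L (R + k%:Z) *m rho <= S L R)%MS.
  by rewrite addsmx_sub !mul_rho_sub_sol //; lia.
rewrite -(mxrank_leqif_sup sub_sum).2 rank_rho_sum rank_sol_mx //; lia.
Qed.

Lemma bulk_decompose psi : sol L R psi ->
  exists2 chi, sol (L - k%:Z) R chi &
  exists2 eta, sol L (R + k%:Z) eta & forall j, L <= j -> j <= R -> psi j = chi j + eta j.
Proof.
move=> sol_psi; have dec_psi : dW (eW psi) = psi by apply: dec_enc_sol sol_psi; lia.
have : (eW psi <= S L R)%MS by apply/sub_sol_winP; rewrite ?dec_psi //; lia.
move/submx_trans/(_ sol_sub_rho_sum)/sub_addsmxP => [[w1 w2] /= psi_eq].
exists (dW (w1 *m S (L - k%:Z) R)); first by apply/sub_sol_winP; rewrite ?submxMl //; lia.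
exists (dW (w2 *m S L (R + k%:Z))); first by apply/sub_sol_winP; rewrite ?submxMl //; lia.
move=> j Lj jR; rewrite -dec_psi psi_eq !mulmxA -[_ *m rho in LHS]scale1r decZD scale1r.
by rewrite !dec_mul_rho !projE Lj jR.
Qed.

End Decomposition.

Lemma bulk_in_span (C : numClosedFieldType) d (a : int -> 'M[C]_d) (p q : int) lo ro
    (S : dseq C d -> Prop) psi :
  p <= q -> (forall v, S v -> bulk a p q lo ro v) -> in_span S psi -> bulk a p q lo ro psi.
Proof.
move=> hpq S_sol [s [inS ->]]; elim: s inS => [|[c v] s IHs] inS.
  have -> : (fun j => \sum_(x <- [::] : seq (C * dseq C d)) x.1 *: x.2 j) = (fun _ => 0).
    by apply: functional_extensionality => j; rewrite big_nil.
  exact: bulk0.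
have -> : (fun j => \sum_(x <- (c, v) :: s) x.1 *: x.2 j) =
          (fun j => c *: v j + \sum_(x <- s) x.1 *: x.2 j).
  by apply: functional_extensionality => j; rewrite big_cons.
apply: (bulkZD hpq); first by apply: S_sol; apply: (inS (c, v)); left.
by apply: IHs => x sx; apply: inS; right.
Qed.

Unset Implicit Arguments.

Theorem mainTheorem10 (C : numClosedFieldType) (d : nat) (hd : (0 < d)%N)
    (a : int -> 'M[C]_d) (p q : int)
    (hband : bandwidth a p q) (hreg : regular a p q)
    (L R : int) (hLR : L <= R) (htau : tau p q <= R - L) :
  forall psi : dseq C d,
    bulk a p q (Some L) (Some R) psi <->
    in_span (fun v : dseq C d =>
               (exists phi, bulk a p q None (Some R) phi /\
                            v = proj (Some L) (Some R) phi) \/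
               (exists phi, bulk a p q (Some L) None phi /\
                            v = proj (Some L) (Some R) phi)) psi.
Proof.
case: hband => hpq [_ [_ a_out]] psi; split=> [sol_psi|]; last first.
  apply: bulk_in_span => // v [] [phi [sol_phi ->]];
    by apply: (bulk_proj hpq sol_phi) => j; rewrite /in_rangeb /=; lia.
have [k0 extend_l] := bulk_extend_left a hpq htau.
have [k1 extend_r] := bulk_extend_right a hpq htau.
have [chi sol_chi [eta sol_eta psi_eq]] :=
  bulk_decompose hpq a_out hreg (maxn k0 k1) htau sol_psi.
have [phi1 sol1 phi1_chi] := extend_l _ _ (leq_maxl k0 k1) sol_chi.
have [phi2 sol2 phi2_eta] := extend_r _ _ (leq_maxr k0 k1) sol_eta.
exists [:: (1, pr L R phi1); (1, pr L R phi2)]; split.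
  by move=> x /= [<-|[<-|[]]]; [left; exists phi1 | right; exists phi2].
apply: functional_extensionality => j; rewrite !big_cons big_nil /= !scale1r addr0 !projE.
case: ifP => [/andP[Lj jR]|/negbT out_j]; first by rewrite phi1_chi ?phi2_eta ?psi_eq.
by case/(bulkP a hpq): sol_psi => [-> //]; rewrite addr0.
Qed.
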